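(* Let $\beta>1$ be a Yrrap number. For $w\in\mathcal{L}(\Sigma_{-\beta})$ let $g_\beta(w)$ be the minimal integer $i\ge0$ such that there exist $v\in\mathcal{L}_i(\Sigma_{-\beta})$ and integers $0\le c<d\le b$ with $wvc,wvd\in\mathcal{L}(\Sigma_{-\beta})$, and let $g_\beta(n)=\sup_{w\in\mathcal{L}_n(\Sigma_{-\beta})}g_\beta(w)$. If $\lim_{n\to\infty}g_\beta(n)/n=0$, then $$\liminf_{n\to\infty}\inf_{w\in\mathcal{L}_n(\Sigma_{-\beta})}\Big(\frac1n\log L_{-\beta}([w])+\log\beta\Big)\ge0.$$
   Context: $(-\beta)$-transformation: $b=\max\{k\in\mathbb{Z}:k<\beta\}$, $I_i=(i/\beta,(i+1)/\beta)$ ($0\le i\le b-1$), $I_b=(b/\beta,1)$, $T_{-\beta}(x)=-\beta x+(i+1)$ on $I_i$; for $x\notin\bigcup_{i\ge0}T_{-\beta}^{-i}\{0,1/\beta,\dots,b/\beta,1\}$, $(i'(x))_k=j$ iff $T_{-\beta}^k(x)\in I_j$; $i'(1)=\lim_{x\to1^-}i'(x)$. Case 1: $i'(1)=(w0)^\infty$ for some finite word $w$; then $T_{-\beta}(0)=1$, $T_{-\beta}(i/\beta)=0$ ($1\le i\le b$), $T_{-\beta}(1)=\lim_{x\to1^-}T_{-\beta}(x)$. Case 2: otherwise; $T_{-\beta}(0)=1$, $T_{-\beta}(i/\beta)=1$ ($1\le i\le b$), $T_{-\beta}(1)=\lim_{x\to1^-}T_{-\beta}(x)$. Yrrap: the $T_{-\beta}$-orbit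 of $1$ is eventually periodic. $\Sigma_{-\beta}$: closure in $\{0,\dots,b\}^{\mathbb{Z}_+}$ of the set of $i'(x)$ over non-preimages $x$ of partition points, with shift $\sigma$; $\mathcal{L}(\Sigma_{-\beta})$ its language, $\mathcal{L}_n$ words of length $n$, $[w]$ cylinder sets. $\Phi\colon[0,1]\to\Sigma_{-\beta}$: in Case 1 let $J_0=[0,1/\beta]$, $J_i=(i/\beta,(i+1)/\beta]$ ($1\le i\le b-1$), $J_b=(b/\beta,1]$; in Case 2 let $J_i=[i/\beta,(i+1)/\beta)$ ($0\le i\le b-1$), $J_b=[b/\beta,1]$; $(\Phi(x))_i=j$ iff $T_{-\beta}^i(x)\in J_j$. $L_{-\beta}=L\circ\Phi^{-1}$, $L$ Lebesgue measure. *)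

From Stdlib Require Import Reals Lra List ZArith Classical ClassicalEpsilon.
Import ListNotations.
Open Scope R_scope.

(* b = max { k in Z : k < beta }.  (up beta is the least integer > beta.) *)
Definition bZ (beta : R) : Z :=
  if Rlt_dec (IZR (up beta - 1)) beta then (up beta - 1)%Z else (up beta - 2)%Z.
Definition bnat (beta : R) : nat := Z.to_nat (bZ beta).

Definition part_pt (beta y : R) : Prop :=
  y = 0 \/ y = 1 \/ exists i : nat, (1 <= i <= bnat beta)%nat /\ y = INR i / beta.

(* T_{-beta} on the open intervals I_i : x |-> -beta x + (i+1), i = floor(beta x) *)
Definition Tgen (beta y : R) : R := - beta * y + (IZR (Int_part (beta * y)) + 1).

Definition nonpre (beta x : R) : Prop :=
  0 <= x <= 1 /\ forall n : nat, ~ part_pt beta (Nat.iter n (Tgen beta) x).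

(* (i'(x))_k = j iff T^k x in I_j, for non-preimages x *)
Definition idig (beta x : R) (k : nat) : nat :=
  Z.to_nat (Int_part (beta * Nat.iter k (Tgen beta) x)).

(* (i'(1))_k = j, where i'(1) = lim_{x -> 1^-} i'(x) (product topology) *)
Definition i1_digit (beta : R) (k j : nat) : Prop :=
  exists delta, 0 < delta /\
    forall x, 1 - delta < x < 1 -> nonpre beta x -> idig beta x k = j.

Definition periodic_w0 (w : list nat) (k : nat) : nat :=
  nth (k mod (length w + 1)) (w ++ [0%nat]) 0%nat.

Definition Case1 (beta : R) : Prop :=
  exists w : list nat, forall k, i1_digit beta k (periodic_w0 w k).

(* The full map T_{-beta} on [0,1], with the case-dependent values at
   partition points; T(1) = lim_{x->1^-} T(x) = -beta + (b+1). *)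
Definition Tm (beta y : R) : R :=
  if Req_EM_T y 0 then 1
  else if Req_EM_T y 1 then - beta * 1 + (INR (bnat beta) + 1)
  else if excluded_middle_informative (part_pt beta y) then
    (if excluded_middle_informative (Case1 beta) then 0 else 1)
  else Tgen beta y.

Definition Yrrap (beta : R) : Prop :=
  exists m p : nat, (0 < p)%nat /\
    Nat.iter (m + p) (Tm beta) 1 = Nat.iter m (Tm beta) 1.

Definition inJ (beta : R) (j : nat) (y : R) : Prop :=
  let b := bnat beta in
  (Case1 beta /\
    ((j = 0%nat /\ 0 <= y <= 1 / beta)
     \/ ((1 <= j)%nat /\ (j < b)%nat /\ INR j / beta < y <= (INR j + 1) / beta)
     \/ (j = b /\ INR b / beta < y <= 1)))
  \/ (~ Case1 beta /\
    (((j < b)%nat /\ INR j / beta <= y < (INR j + 1) / beta)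
     \/ (j = b /\ INR b / beta <= y <= 1))).

(* Sigma_{-beta}: closure of { i'(x) } in the product topology *)
Definition inSigma (beta : R) (y : nat -> nat) : Prop :=
  forall n : nat, exists x, nonpre beta x /\
    forall k, (k < n)%nat -> y k = idig beta x k.

Definition inL (beta : R) (w : list nat) : Prop :=
  exists y, inSigma beta y /\
    exists m : nat, forall k, (k < length w)%nat -> y (m + k)%nat = nth k w 0%nat.

Definition in_cyl (beta : R) (w : list nat) (y : nat -> nat) : Prop :=
  inSigma beta y /\ forall k, (k < length w)%nat -> y k = nth k w 0%nat.

Definition Phi_rel (beta x : R) (y : nat -> nat) : Prop :=
  forall i : nat, inJ beta (y i) (Nat.iter i (Tm beta) x).

Definition Phi_preim_cyl (beta : R) (w : list nat) (x : R) : Prop :=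
  0 <= x <= 1 /\ exists y, Phi_rel beta x y /\ in_cyl beta w y.

Definition cover_sum (A : R -> Prop) (s : R) : Prop :=
  exists a c : nat -> R, (forall n, a n <= c n) /\
    (forall x, A x -> exists n, a n < x < c n) /\
    infinite_sum (fun n => c n - a n) s.

Definition lebesgue_measure_is (A : R -> Prop) (m : R) : Prop :=
  (forall s, cover_sum A s -> m <= s) /\
  (forall eps, 0 < eps -> exists s, cover_sum A s /\ s < m + eps).

Definition gap_ok (beta : R) (w : list nat) (i : nat) : Prop :=
  exists v : list nat, length v = i /\ inL beta v /\
    exists c d : nat, (c < d)%nat /\ (d <= bnat beta)%nat /\
      inL beta (w ++ v ++ [c]) /\ inL beta (w ++ v ++ [d]).

Definition is_g (beta : R) (w : list nat) (i : nat) : Prop :=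
  gap_ok beta w i /\ forall j, (j < i)%nat -> ~ gap_ok beta w j.

From Stdlib Require Import Reals List.
Open Scope R_scope.
From Stdlib Require Import Lra Lia ZArith Classical ClassicalEpsilon.
From mathcomp Require all_boot all_order all_algebra.
From mathcomp Require all_classical all_reals all_analysis.
From mathcomp Require Rstruct Rstruct_topology.

(* For a Yrrap number the orbit of 1 under T_{-beta} is finite, so the set of
   "critical" values {0} U {T^k(1)} is finite and has a minimal gap d > 0.
   Around any point x whose orbit avoids the partition points, T^n is affine
   of slope (-beta)^n on the interval of points sharing the first n digits of x,
   and each cut by a branch interval sends critical endpoints to critical ones
   (or creates the endpoint 0 or 1).  So the image of that interval under T^n
   is an interval of length at least d, and the cylinder [w] contains, up to
   the countable set of preimages of partition points, an interval of length
   at least d beta^(-n).  Hence L_{-beta}([w]) >= d beta^(-n). *)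

Module Lebesgue.
Import all_boot all_order all_algebra all_classical all_reals all_analysis.
Import Rstruct Rstruct_topology.
Import Order.TTheory GRing.Theory Num.Theory.
Local Open Scope classical_set_scope.
Local Open Scope ring_scope.

Lemma enum_option_nat_list (h : option nat -> list nat -> R) :
  exists g : nat -> R, forall o l, exists n, g n = h o l.
Proof.
exists (fun n => if @unpickle (option nat * seq nat)%type n is Some (o, l)
  then h o l else 0).
by move=> o l; exists (pickle (o, l)); rewrite pickleK.
Qed.

Lemma nneseries_le_infinite_sum (u : nat -> R) (s : R) :
  (forall n, 0 <= u n)%coqR -> infinite_sum u s ->
  (\sum_(n <oo) (u n)%:E <= s%:E)%E.
Proof.
move=> u0 hs.
have partial_le n : (sum_f_R0 u n <= s)%coqR.
  apply: (growing_ineq (sum_f_R0 u)) => // k /=.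
  by have := u0 k.+1; lra.
apply: lime_le.
  by apply: is_cvg_nneseries => n _ _; rewrite lee_fin; apply/RleP; exact: u0.
apply: nearW => -[|n].
  rewrite big_geq // lee_fin; apply/RleP.
  by have := partial_le 0%N; have := u0 0%N; rewrite /= -?R0E; lra.
by rewrite sumEFin lee_fin -sum_f_R0E; apply/RleP.
Qed.

(* Sigma-subadditivity of Lebesgue measure, [range g] being a null set. *)
Lemma interval_le_cover_sum (g : nat -> R) (p q s : R) (a c : nat -> R) :
  (p < q)%coqR -> (forall n, a n <= c n)%coqR ->
  infinite_sum (fun n => c n - a n)%coqR s ->
  (forall z, p < z < q -> (forall k, z <> g k) -> exists n, a n < z < c n)%coqR ->
  (q - p <= s)%coqR.
Proof.
move=> pq ac hs hcov.
have cg : countable (range g) by exact: card_image_le.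
have mg : @measurable _ (measurableTypeR R) (range g).
  by apply: countable_measurable => // t; exact: measurable_set1.
have lg : lebesgue_measure (range g) = 0%E by exact: countable_lebesgue_measure0.
pose F n : set (measurableTypeR R) := `]a n, c n[%classic `|` range g.
have sub : `]p, q[%classic `<=` \bigcup_n F n.
  move=> z /=; rewrite in_itv /= => /andP[/RltP pz /RltP zq].
  have [[k ->]|ne] := Classical_Prop.classic (exists k, z = g k).
    by exists 0%N => //; right; exists k.
  have [n /= [an cn]] := hcov z (conj pz zq) (fun k e => ne (ex_intro _ k e)).
  by exists n => //; left; rewrite /= in_itv /=; apply/andP; split; apply/RltP.
have mF n : measurable (F n) by apply: measurableU.
have le_sub := measure_sigma_subadditive (lebesgue_measure (R:=R)) mF
  (measurable_itv `]p, q[) sub.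
have le_len : (\sum_(n <oo) lebesgue_measure (F n) <= \sum_(n <oo) ((c n - a n)%:E))%E.
  apply: lee_nneseries => [n _ _|n _]; first exact: measure_ge0.
  have hu := measureU2 (lebesgue_measure (R:=R)) (measurable_itv `]a n, c n[) mg.
  apply: (le_trans hu); rewrite [X in (_ + X)%E]lg adde0.
  have := lebesgue_measure_itv (R:=R) `]a n, c n[; rewrite /= => ->.
  by case: ifP => // _; rewrite lee_fin subr_ge0; apply/RleP.
have le_s := nneseries_le_infinite_sum (fun n => c n - a n)%coqR s
  (fun n => ltac:(have := ac n; lra)) hs.
have := le_trans le_sub (le_trans le_len le_s).
have := lebesgue_measure_itv (R:=R) `]p, q[; rewrite /= => ->.
rewrite lte_fin.
have -> : (p < q)%R by apply/RltP.
by rewrite lee_fin => /RleP; rewrite -RminusE.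
Qed.

End Lebesgue.


Lemma lebesgue_measure_ge_interval (A : R -> Prop) (g : nat -> R) (p q m : R) :
  p < q -> lebesgue_measure_is A m ->
  (forall z, p < z < q -> (forall k, z <> g k) -> A z) -> q - p <= m.
Proof.
  intros Hpq [_ Happrox] HA. apply Rnot_lt_le. intro Hm.
  destruct (Happrox (q - p - m)) as [s [[a [c [Hac [Hcov Hsum]]]] Hs]]; [lra|].
  assert (q - p <= s).
  { apply (Lebesgue.interval_le_cover_sum g p q s a c Hpq Hac Hsum).
    intros z Hz Hg. apply Hcov, HA; auto. }
  lra.
Qed.

Lemma mul_div_cancel (b a : R) : 0 < b -> b * (a / b) = a.
Proof. intro Hb. field. lra. Qed.

Lemma INR_Z_to_nat (z : Z) : (0 <= z)%Z -> INR (Z.to_nat z) = IZR z.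
Proof. intro H. rewrite INR_IZR_INZ, Z2Nat.id; auto. Qed.

Lemma Int_part_nonneg (r : R) : 0 <= r -> (0 <= Int_part r)%Z.
Proof.
  intro H. destruct (base_Int_part r).
  assert (-1 < IZR (Int_part r)) as Hlt by lra. apply lt_IZR in Hlt. lia.
Qed.

Lemma Int_part_of_bounds (r : R) (j : nat) : INR j <= r < INR j + 1 -> Int_part r = Z.of_nat j.
Proof. intro H. symmetry. apply Int_part_spec. rewrite <- INR_IZR_INZ. lra. Qed.

Lemma Tgen_in_01 (beta y : R) : 0 < Tgen beta y <= 1.
Proof. unfold Tgen. destruct (base_Int_part (beta * y)). lra. Qed.

Lemma iter_Tgen_in_01 (beta x : R) (k : nat) : 0 <= x <= 1 -> 0 <= Nat.iter k (Tgen beta) x <= 1.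
Proof.
  intro H. destruct k as [|k]; simpl; auto.
  destruct (Tgen_in_01 beta (Nat.iter k (Tgen beta) x)). lra.
Qed.

Lemma Tgen_of_digit (beta y : R) (j : nat) : INR j <= beta * y < INR j + 1 ->
  Tgen beta y = - beta * y + INR j + 1.
Proof. intro H. unfold Tgen. rewrite (Int_part_of_bounds _ j H), <- INR_IZR_INZ. ring. Qed.

Lemma digit_of_bounds (beta y : R) (j : nat) : INR j <= beta * y < INR j + 1 ->
  Z.to_nat (Int_part (beta * y)) = j.
Proof. intro H. rewrite (Int_part_of_bounds _ j H). apply Nat2Z.id. Qed.

Lemma Tm_of_not_part_pt (beta y : R) : ~ part_pt beta y -> Tm beta y = Tgen beta y.
Proof.
  intro H. unfold Tm.
  destruct (Req_EM_T y 0) as [E|_]; [exfalso; apply H; left; auto|].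
  destruct (Req_EM_T y 1) as [E|_]; [exfalso; apply H; right; left; auto|].
  destruct (excluded_middle_informative (part_pt beta y)); [contradiction|auto].
Qed.

Lemma affine_preimage_interval (s x y u v : R) : s <> 0 -> u < y < v ->
  exists p q, p < x < q /\ q - p = (v - u) / Rabs s /\
    forall z, p < z < q -> u < y + s * (z - x) < v.
Proof.
  intros Hs Hy. set (a := Rabs s).
  assert (Ha : 0 < a) by (apply Rabs_pos_lt; auto).
  set (d1 := (y - u) / a). set (d2 := (v - y) / a).
  assert (Hd1 : a * d1 = y - u) by (apply mul_div_cancel; auto).
  assert (Hd2 : a * d2 = v - y) by (apply mul_div_cancel; auto).
  assert (Hlen : d1 + d2 = (v - u) / a) by (unfold d1, d2; field; lra).
  destruct (Rlt_or_le 0 s) as [Hpos|Hneg].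
  - assert (Es : s = a) by (unfold a; rewrite Rabs_pos_eq; lra).
    exists (x - d1), (x + d2). rewrite Es. repeat split; nra.
  - assert (Es : s = - a) by (unfold a; rewrite Rabs_left1; lra).
    exists (x - d2), (x + d1). rewrite Es. repeat split; nra.
Qed.

(* The values that endpoints of T^n-images of cylinder intervals can take. *)
Definition critical (beta y : R) : Prop := y = 0 \/ exists k, y = Nat.iter k (Tm beta) 1.

Section NegativeBeta.

Variable beta : R.
Hypothesis beta_gt1 : 1 < beta.

Lemma bnat_bounds : INR (bnat beta) < beta <= INR (bnat beta) + 1.
Proof.
  unfold bnat, bZ. destruct (archimed beta) as [Hup1 Hup2].
  assert (Hu : (1 < up beta)%Z) by (apply lt_IZR; lra).
  destruct (Rlt_dec (IZR (up beta - 1)) beta) as [Hl|Hl]; rewrite minus_IZR in Hl.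
  - rewrite INR_Z_to_nat, minus_IZR by lia. lra.
  - assert (Hu2 : (2 < up beta)%Z) by (apply lt_IZR; lra).
    rewrite INR_Z_to_nat, minus_IZR by lia. lra.
Qed.

Lemma not_part_pt_of_digit (y : R) (j : nat) : INR j < beta * y < INR j + 1 -> y < 1 ->
  ~ part_pt beta y.
Proof.
  intros Hj Hy [E|[E|[i [_ E]]]]; subst y.
  - pose proof (pos_INR j). lra.
  - lra.
  - rewrite mul_div_cancel in Hj by lra. rewrite <- S_INR in Hj.
    destruct Hj as [Hji Hij]. apply INR_lt in Hji. apply INR_lt in Hij. lia.
Qed.

Lemma nonpre_orbit (x : R) (k : nat) : nonpre beta x ->
  0 < Nat.iter k (Tgen beta) x < 1 /\ ~ part_pt beta (Nat.iter k (Tgen beta) x).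
Proof.
  intros [H01 Hnp]. pose proof (iter_Tgen_in_01 beta x k H01). specialize (Hnp k).
  split; auto.
  assert (Nat.iter k (Tgen beta) x <> 0) by (intro E; apply Hnp; left; auto).
  assert (Nat.iter k (Tgen beta) x <> 1) by (intro E; apply Hnp; right; left; auto).
  lra.
Qed.

Lemma nonpre_digit (x : R) (k : nat) : nonpre beta x ->
  INR (idig beta x k) < beta * Nat.iter k (Tgen beta) x < INR (idig beta x k) + 1 /\
  (idig beta x k <= bnat beta)%nat.
Proof.
  intro Hx. destruct (nonpre_orbit x k Hx) as [Hy Hp].
  set (y := Nat.iter k (Tgen beta) x) in *. set (j := idig beta x k).
  destruct (base_Int_part (beta * y)) as [H1 H2].
  assert (Hj : INR j = IZR (Int_part (beta * y))) by (apply INR_Z_to_nat, Int_part_nonneg; nra).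
  destruct bnat_bounds as [B1 B2].
  assert (Hjb : (j <= bnat beta)%nat).
  { assert (INR j < INR (S (bnat beta))) as Hlt by (rewrite S_INR; nra).
    apply INR_lt in Hlt. lia. }
  assert (Hne : INR j <> beta * y).
  { intro E. apply Hp.
    assert (Ey : y = INR j / beta) by (rewrite E; field; lra).
    destruct (Nat.eq_dec j 0) as [E0|E0].
    - left. rewrite Ey, E0. simpl. field. lra.
    - right; right. exists j. split; [lia|auto]. }
  repeat split; auto; lra.
Qed.

Lemma nonpre_iter_Tm (x : R) : nonpre beta x ->
  forall k, Nat.iter k (Tm beta) x = Nat.iter k (Tgen beta) x.
Proof.
  intros Hx k. induction k as [|k IH]; simpl; auto.
  rewrite IH. apply Tm_of_not_part_pt, (nonpre_orbit x k Hx).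
Qed.

Lemma nonpre_inJ (x : R) : nonpre beta x ->
  forall i, inJ beta (idig beta x i) (Nat.iter i (Tm beta) x).
Proof.
  intros Hx i. rewrite nonpre_iter_Tm by auto.
  destruct (nonpre_orbit x i Hx) as [Hy _]. destruct (nonpre_digit x i Hx) as [Hj Hjb].
  set (y := Nat.iter i (Tgen beta) x) in *. set (j := idig beta x i) in *.
  assert (Hlo : INR j / beta < y).
  { apply (Rmult_lt_reg_l beta); [lra|]. rewrite mul_div_cancel; lra. }
  assert (Hhi : y < (INR j + 1) / beta).
  { apply (Rmult_lt_reg_l beta); [lra|]. rewrite mul_div_cancel; lra. }
  unfold inJ. destruct (classic (Case1 beta)) as [C|C]; [left|right]; split; auto.
  - destruct (Nat.eq_dec j 0) as [E|E].
    + left. split; auto. rewrite E in Hhi. simpl in Hhi. lra.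
    + destruct (Nat.eq_dec j (bnat beta)) as [E2|E2].
      * right; right. rewrite <- E2. split; [auto|lra].
      * right; left. split; [lia|split; [lia|lra]].
  - destruct (Nat.eq_dec j (bnat beta)) as [E2|E2].
    + right. rewrite <- E2. split; [auto|lra].
    + left. split; [lia|lra].
Qed.

Lemma Phi_preim_cyl_of_nonpre (w : list nat) (z : R) : nonpre beta z ->
  (forall k, (k < length w)%nat -> idig beta z k = nth k w 0%nat) ->
  Phi_preim_cyl beta w z.
Proof.
  intros Hz Hw. split; [apply Hz|]. exists (idig beta z). split.
  - intro i. apply nonpre_inJ; auto.
  - split; auto. intro n. exists z. split; auto.
Qed.

Lemma critical_Tgen (y : R) (j : nat) : critical beta y -> INR j < beta * y < INR j + 1 -> y < 1 ->
  critical beta (- beta * y + INR j + 1).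
Proof.
  intros Hy Hj Hy1.
  assert (Hp : ~ part_pt beta y) by (apply (not_part_pt_of_digit y j); auto).
  destruct Hy as [E|[k E]].
  - exfalso. apply Hp. left. auto.
  - right. exists (S k). simpl. rewrite <- E, Tm_of_not_part_pt by auto.
    symmetry. apply Tgen_of_digit. lra.
Qed.

Lemma critical_branch_left (u y : R) (j : nat) : critical beta u -> u < y ->
  INR j < beta * y < INR j + 1 -> y < 1 ->
  critical beta (- beta * Rmax u (INR j / beta) + INR j + 1).
Proof.
  intros Hu Huy Hj Hy1. unfold Rmax. destruct (Rle_dec u (INR j / beta)).
  - right. exists 0%nat. simpl. field. lra.
  - apply critical_Tgen; auto; [|lra]. split; [|nra].
    rewrite <- (mul_div_cancel beta (INR j)) by lra.
    apply Rmult_lt_compat_l; lra.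
Qed.

Lemma critical_branch_right (v y : R) (j : nat) : critical beta v -> y < v -> v <= 1 ->
  INR j < beta * y < INR j + 1 -> (j <= bnat beta)%nat ->
  critical beta (- beta * Rmin v ((INR j + 1) / beta) + INR j + 1).
Proof.
  intros Hv Hyv Hv1 Hj Hjb.
  assert (Hv' : beta * v < INR j + 1 -> critical beta (- beta * v + INR j + 1)).
  { intro Hvj. destruct (Req_dec v 1) as [E|E].
    - (* Only the last branch reaches 1, and there T(1) is the left limit. *)
      rewrite E, Rmult_1_r in Hvj.
      assert (Ej : j = bnat beta).
      { destruct bnat_bounds.
        assert (INR (bnat beta) < INR (S j)) as Hlt by (rewrite S_INR; lra).
        apply INR_lt in Hlt. lia. }
      subst v j. right. exists 1%nat. simpl. unfold Tm.
      destruct (Req_EM_T 1 0); [lra|]. destruct (Req_EM_T 1 1); [ring|lra].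
    - apply critical_Tgen; auto; [nra|lra]. }
  unfold Rmin. destruct (Rle_dec v ((INR j + 1) / beta)) as [Hle|Hgt].
  - destruct (Req_dec v ((INR j + 1) / beta)) as [E|E].
    + left. rewrite E. field. lra.
    + apply Hv'. rewrite <- (mul_div_cancel beta (INR j + 1)) by lra.
      apply Rmult_lt_compat_l; lra.
  - left. field. lra.
Qed.

(* T^n is affine of slope (-beta)^n on the interval of points near x whose
   extrapolated image lies in (u, v), and these points share the first n digits of x. *)
Record branch (x : R) (n : nat) (u v : R) : Prop := {
  branch_critical_l : critical beta u;
  branch_critical_r : critical beta v;
  branch_le_1 : v <= 1;
  branch_mem : u < Nat.iter n (Tgen beta) x < v;
  branch_affine : forall z,
    u < Nat.iter n (Tgen beta) x + (- beta) ^ n * (z - x) < v ->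
    0 < z < 1 /\ (forall k, (k < n)%nat -> idig beta z k = idig beta x k) /\
    Nat.iter n (Tgen beta) z = Nat.iter n (Tgen beta) x + (- beta) ^ n * (z - x) }.

Lemma branch_0 (x : R) : nonpre beta x -> branch x 0 0 1.
Proof.
  intro Hx. destruct (nonpre_orbit x 0 Hx) as [Hx01 _]. simpl in Hx01.
  split; simpl.
  - left. reflexivity.
  - right. exists 0%nat. reflexivity.
  - lra.
  - exact Hx01.
  - intros z Hz. split; [lra|split; [intros k Hk; lia|ring]].
Qed.

Lemma branch_S (x : R) (n : nat) (u v : R) : nonpre beta x -> branch x n u v ->
  let j := idig beta x n in
  branch x (S n)
    (- beta * Rmin v ((INR j + 1) / beta) + INR j + 1)
    (- beta * Rmax u (INR j / beta) + INR j + 1).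
Proof.
  intros Hx [Hu Hv Hv1 Hmem Haff] j.
  set (y := Nat.iter n (Tgen beta) x) in *.
  destruct (nonpre_digit x n Hx) as [Hj Hjb]. fold y j in Hj, Hjb.
  set (u' := Rmax u (INR j / beta)). set (v' := Rmin v ((INR j + 1) / beta)).
  assert (Hu' : u <= u' /\ INR j <= beta * u').
  { split; [apply Rmax_l|]. rewrite <- (mul_div_cancel beta (INR j)) by lra.
    apply Rmult_le_compat_l; [lra|apply Rmax_r]. }
  assert (Hv' : v' <= v /\ beta * v' <= INR j + 1).
  { split; [apply Rmin_l|]. rewrite <- (mul_div_cancel beta (INR j + 1)) by lra.
    apply Rmult_le_compat_l; [lra|apply Rmin_r]. }
  assert (Hyu' : u' < y).
  { apply Rmax_lub_lt; [lra|]. apply (Rmult_lt_reg_l beta); [lra|].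
    rewrite mul_div_cancel; lra. }
  assert (Hyv' : y < v').
  { apply Rmin_glb_lt; [lra|]. apply (Rmult_lt_reg_l beta); [lra|].
    rewrite mul_div_cancel; lra. }
  assert (HTy : Nat.iter (S n) (Tgen beta) x = - beta * y + INR j + 1)
    by (apply Tgen_of_digit; lra).
  split.
  - apply (critical_branch_right v y j); auto; lra.
  - apply (critical_branch_left u y j); auto; lra.
  - nra.
  - rewrite HTy. fold u' v'. nra.
  - intros z Hz. rewrite HTy in *.
    set (t := y + (- beta) ^ n * (z - x)).
    assert (Ht : - beta * y + INR j + 1 + (- beta) ^ S n * (z - x) = - beta * t + INR j + 1)
      by (unfold t; simpl; ring).
    rewrite Ht in *. fold u' v' in Hz.
    assert (Htuv : u' < t < v') by nra.
    destruct (Haff z ltac:(fold t; lra)) as [Hz01 [Hdig HTz]]. fold t in HTz.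
    assert (Htj : INR j < beta * t < INR j + 1) by nra.
    split; [auto|split].
    + intros k Hk. destruct (Nat.eq_dec k n) as [->|Ekn]; [|apply Hdig; lia].
      change (Z.to_nat (Int_part (beta * Nat.iter n (Tgen beta) z)) = j).
      rewrite HTz. apply digit_of_bounds. lra.
    + simpl. rewrite HTz. apply Tgen_of_digit. lra.
Qed.

Lemma branch_exists (x : R) : nonpre beta x -> forall n, exists u v, branch x n u v.
Proof.
  intros Hx n. induction n as [|n [u [v Hb]]].
  - exists 0, 1. apply branch_0; auto.
  - eexists; eexists. apply (branch_S x n u v Hx Hb).
Qed.

Lemma branch_interval (x : R) (n : nat) (u v : R) : branch x n u v ->
  exists p q, p < x < q /\ q - p = (v - u) / beta ^ n /\
    forall z, p < z < q -> 0 < z < 1 /\ forall k, (k < n)%nat -> idig beta z k = idig beta x k.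
Proof.
  intros [_ _ _ Hmem Haff].
  assert (Hs : Rabs ((- beta) ^ n) = beta ^ n)
    by (rewrite <- RPow_abs, Rabs_Ropp, Rabs_pos_eq; lra).
  destruct (affine_preimage_interval ((- beta) ^ n) x (Nat.iter n (Tgen beta) x) u v)
    as [p [q [Hpxq [Hlen Hz]]]]; auto.
  { apply pow_nonzero. lra. }
  exists p, q. rewrite Hs in Hlen. split; [auto|split; [auto|]].
  intros z Hzpq. destruct (Haff z (Hz z Hzpq)) as [Hz01 [Hdig _]]. auto.
Qed.

End NegativeBeta.

Lemma inL_witness (beta : R) (w : list nat) : inL beta w -> exists x, nonpre beta x /\
  forall k, (k < length w)%nat -> idig beta x k = nth k w 0%nat.
Proof.
  intros [y [Hy [m Hm]]]. destruct (Hy (m + length w)%nat) as [x [Hx Hxy]].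
  exists (Nat.iter m (Tgen beta) x). split.
  - split; [apply iter_Tgen_in_01, Hx|]. intro n. rewrite <- Nat.iter_add. apply Hx.
  - intros k Hk. rewrite <- Hm, Hxy by lia. unfold idig.
    rewrite <- Nat.iter_add, Nat.add_comm. reflexivity.
Qed.

Fixpoint inverse_branches (beta c : R) (l : list nat) : R :=
  match l with
  | nil => c
  | i :: l' => (INR i + 1 - inverse_branches beta c l') / beta
  end.

Lemma inverse_branches_of_iter (beta : R) (k : nat) : 0 < beta -> forall z, 0 <= z ->
  exists l, z = inverse_branches beta (Nat.iter k (Tgen beta) z) l.
Proof.
  intros Hb. induction k as [|k IH]; intros z Hz.
  - exists nil. reflexivity.
  - rewrite Nat.iter_succ_r.
    destruct (Tgen_in_01 beta z) as [T0 _].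
    destruct (IH (Tgen beta z)) as [l El]; [lra|].
    exists (Z.to_nat (Int_part (beta * z)) :: l). simpl. rewrite <- El.
    rewrite INR_Z_to_nat by (apply Int_part_nonneg; nra).
    unfold Tgen. field. lra.
Qed.

Lemma part_pt_preimages_enum (beta : R) : 0 < beta -> exists g : nat -> R,
  forall z k, 0 <= z -> part_pt beta (Nat.iter k (Tgen beta) z) -> exists n, z = g n.
Proof.
  intro Hb.
  set (target o := match o with Some i => INR i / beta | None => 1 end).
  destruct (Lebesgue.enum_option_nat_list (fun o l => inverse_branches beta (target o) l))
    as [g Hg].
  exists g. intros z k Hz Hpart.
  destruct (inverse_branches_of_iter beta k Hb z Hz) as [l El].
  assert (Ho : exists o, Nat.iter k (Tgen beta) z = target o).
  { destruct Hpart as [E|[E|[i [_ E]]]]; rewrite E.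
    - exists (Some 0%nat). simpl. unfold Rdiv. ring.
    - exists None. reflexivity.
    - exists (Some i). reflexivity. }
  destruct Ho as [o Eo]. destruct (Hg o l) as [n En].
  exists n. rewrite En, <- Eo. exact El.
Qed.

Lemma list_min_dist (h : R) (l : list R) :
  exists d, 0 < d /\ forall b, In b l -> b <> h -> d <= Rabs (b - h).
Proof.
  induction l as [|a l [d [Hd H]]].
  - exists 1. split; [lra|]. intros b [].
  - destruct (Req_dec a h) as [E|E].
    + exists d. split; auto. intros b [Eb|Hb] Hn; [subst; contradiction|auto].
    + exists (Rmin d (Rabs (a - h))). split.
      * apply Rmin_glb_lt; auto. apply Rabs_pos_lt. lra.
      * intros b [<-|Hb] Hn; [apply Rmin_r|].
        apply Rle_trans with d; [apply Rmin_l|auto].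
Qed.

Lemma list_min_gap (l : list R) :
  exists d, 0 < d /\ forall a b, In a l -> In b l -> a < b -> d <= b - a.
Proof.
  induction l as [|h l [d1 [Hd1 H1]]].
  - exists 1. split; [lra|]. intros a b [].
  - destruct (list_min_dist h l) as [d2 [Hd2 H2]].
    exists (Rmin d1 d2). split; [apply Rmin_glb_lt; auto|].
    pose proof (Rmin_l d1 d2). pose proof (Rmin_r d1 d2).
    intros a b [<-|Ha] [<-|Hb] Hab.
    + lra.
    + specialize (H2 b Hb ltac:(lra)). rewrite Rabs_right in H2; lra.
    + specialize (H2 a Ha ltac:(lra)). rewrite Rabs_left in H2; lra.
    + specialize (H1 a b Ha Hb Hab). lra.
Qed.

Lemma Yrrap_critical_finite (beta : R) : Yrrap beta -> exists L, forall y, critical beta y -> In y L.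
Proof.
  intros [M [P [HP HMP]]].
  assert (Hk : forall k, exists k', (k' < M + P)%nat /\
                 Nat.iter k (Tm beta) 1 = Nat.iter k' (Tm beta) 1).
  { intro k. induction k as [k IH] using (well_founded_induction lt_wf).
    destruct (Nat.lt_ge_cases k (M + P)) as [Hl|Hl]; [exists k; auto|].
    destruct (IH (k - P)%nat ltac:(lia)) as [k' [Hk' E]]. exists k'. split; auto.
    rewrite <- E. replace k with ((k - M - P) + (M + P))%nat by lia.
    rewrite Nat.iter_add, HMP, <- Nat.iter_add. f_equal. lia. }
  exists (0 :: map (fun k => Nat.iter k (Tm beta) 1) (seq 0 (M + P))).
  intros y [E|[k E]]; [left; auto|right].
  destruct (Hk k) as [k' [Hk' E']]. apply in_map_iff. exists k'. split.
  - congruence.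
  - apply in_seq. lia.
Qed.

Lemma Yrrap_critical_gap (beta : R) : Yrrap beta ->
  exists d, 0 < d /\ forall u v, critical beta u -> critical beta v -> u < v -> d <= v - u.
Proof.
  intro Hy. destruct (Yrrap_critical_finite beta Hy) as [L HL].
  destruct (list_min_gap L) as [d [Hd H]]. exists d. split; auto.
Qed.

Lemma cylinder_measure_ge (beta : R) : 1 < beta -> Yrrap beta -> exists d, 0 < d /\
  forall w m, inL beta w -> lebesgue_measure_is (Phi_preim_cyl beta w) m ->
    d / beta ^ length w <= m.
Proof.
  intros Hb Hy. destruct (Yrrap_critical_gap beta Hy) as [d [Hd Hgap]].
  destruct (part_pt_preimages_enum beta) as [g Hg]; [lra|].
  exists d. split; auto. intros w m Hw Hm.
  destruct (inL_witness beta w Hw) as [x [Hx Hxw]].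
  destruct (branch_exists beta Hb x Hx (length w)) as [u [v Hbr]].
  destruct (branch_interval beta Hb x _ u v Hbr) as [p [q [Hpxq [Hlen Hz]]]].
  assert (Hqp : q - p <= m).
  { apply (lebesgue_measure_ge_interval (Phi_preim_cyl beta w) g p q m); [lra|exact Hm|].
    intros z Hzpq Hzg. destruct (Hz z Hzpq) as [Hz01 Hdig].
    apply Phi_preim_cyl_of_nonpre; auto.
    - split; [lra|]. intros k Hk.
      destruct (Hg z k ltac:(lra) Hk) as [n En]. apply (Hzg n En).
    - intros k Hk. rewrite Hdig; auto. }
  destruct Hbr as [Hu Hv _ Hmem _].
  assert (Hduv : d <= v - u) by (apply Hgap; auto; lra).
  assert (HB : 0 < beta ^ length w) by (apply pow_lt; lra).
  apply Rle_trans with (q - p); auto. rewrite Hlen.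
  apply Rmult_le_compat_r; [left; apply Rinv_0_lt_compat|]; lra.
Qed.

Lemma ln_rate_ge (beta d m eps : R) (n : nat) : 0 < beta -> 0 < d -> 0 < eps ->
  Rabs (ln d) / eps < INR n -> d / beta ^ n <= m -> ln m / INR n + ln beta >= - eps.
Proof.
  intros Hb Hd Heps Hn Hm.
  assert (Hln0 : 0 <= Rabs (ln d) / eps)
    by (apply Rmult_le_pos; [apply Rabs_pos|left; apply Rinv_0_lt_compat; lra]).
  assert (HB : 0 < beta ^ n) by (apply pow_lt; lra).
  assert (HdB : 0 < d / beta ^ n) by (apply Rdiv_lt_0_compat; lra).
  assert (Hln : ln d - INR n * ln beta <= ln m).
  { replace (ln d - INR n * ln beta) with (ln (d / beta ^ n)).
    - destruct (Req_dec (d / beta ^ n) m) as [<-|E]; [lra|].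
      left. apply ln_increasing; lra.
    - unfold Rdiv. rewrite ln_mult, ln_Rinv, ln_pow; try apply Rinv_0_lt_compat; lra. }
  assert (Hnd : - ln d < eps * INR n).
  { pose proof (Rle_abs (- ln d)) as Habs. rewrite Rabs_Ropp in Habs.
    apply (Rmult_lt_compat_l eps) in Hn; [|lra].
    replace (eps * (Rabs (ln d) / eps)) with (Rabs (ln d)) in Hn by (field; lra). lra. }
  apply Rle_ge, (Rmult_le_reg_r (INR n)); [lra|].
  replace ((ln m / INR n + ln beta) * INR n) with (ln m + INR n * ln beta) by (field; lra).
  lra.
Qed.

Theorem lemma6p4 (beta : R) (Hbeta : 1 < beta) (Hy : Yrrap beta)
  (Hg : forall eps, 0 < eps -> exists N : nat, forall n : nat, (N <= n)%nat ->
          forall w : list nat, length w = n -> inL beta w ->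
          exists i : nat, is_g beta w i /\ INR i <= eps * INR n) :
  forall eps, 0 < eps -> exists N : nat, forall n : nat, (N <= n)%nat ->
    forall w : list nat, length w = n -> inL beta w ->
    forall m : R, lebesgue_measure_is (Phi_preim_cyl beta w) m ->
      0 < m /\ ln m / INR n + ln beta >= - eps.
Proof.
  intros eps Heps.
  destruct (cylinder_measure_ge beta Hbeta Hy) as [d [Hd Hcyl]].
  destruct (INR_unbounded (Rabs (ln d) / eps)) as [N HN].
  exists N. intros n Hn w Hw HwL m Hm.
  specialize (Hcyl w m HwL Hm). rewrite Hw in Hcyl.
  assert (HnN : Rabs (ln d) / eps < INR n)
    by (apply Rlt_le_trans with (INR N); [lra|apply le_INR; auto]).
  split.
  - apply Rlt_le_trans with (d / beta ^ n); auto.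
    apply Rdiv_lt_0_compat; [auto|apply pow_lt; lra].
  - apply (ln_rate_ge beta d); auto; lra.
Qed.
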